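(* Let $d\ge1$ and let $\Psi$, $B$, $b$ satisfy the standing assumptions (A1)–(A4) in the context, and for $h>0$ let $b_h(t,x)=\frac{b(t,x)}{1+h|b(t,x)|}$. Then there exists $h_{\max}>0$ such that $$\lim_{r\to\infty}\ \sup_{|x|\ge r,\ t\ge0,\ 0<h\le h_{\max}}\Big(2\Big\langle\frac{x}{|x|},b_h(t,x)\Big\rangle+\frac{h}{|x|}|b_h(t,x)|^2\Big)<0.$$
   Context: $|\cdot|$ is the Euclidean norm on vectors and the operator norm on matrices; $a\vee b=\max\{a,b\}$; $\operatorname{div}B$ is the row-wise divergence $(\operatorname{div}B)_i=\sum_j\partial_{x_j}B_{ij}$. Standing assumptions: (A1) $\Psi\in C^2(\mathbb{R}^d)$, $\nabla\Psi$ $L$-Lipschitz, $\nabla\Psi(0)=0$. (A2) $B:[0,\infty)\times\mathbb{R}^d\to\mathbb{R}^{d\times d}$ symmetric with $\beta_lI\preceq B(t,x)\preceq\beta_uI$, $\beta_l,\beta_u>0$. (A3) $B$ is $C^2$ in $x$ and there are $L,n_B>0$, $\delta\ge1/2$ with, for all $x,y$, $s,t>0$: $|B(t,x)-B(t,y)|\vee|\operatorname{div}B(t,x)-\operatorname{div}B(t,y)|\le L(1+|x|^{n_B}+|y|^{n_B})|x-y|$ and $|B(s,x)-B(t,x)|\vee|\operatorname{div}B(s,x)-\operatorname{div}B(t,x)|\le L(1+|x|^{n_B})|s-t|^\delta$. (A4) $b(t,x)=-B(t,x)\nabla\Psi(x)+\operatorname{div}B(t,x)$ satisfies $\lim_{r\to\infty}\sup_{|x|\ge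 r,t\ge0}\langle\frac{x}{|x|},\frac{b(t,x)}{|b(t,x)|}\rangle<0$ and $\lim_{r\to\infty}\inf_{|x|\ge r,t\ge0}|b(t,x)|=\infty$. *)

From HB Require Import structures.
From mathcomp Require Import all_boot all_order all_algebra.
From mathcomp Require Import all_classical all_reals all_analysis.
Set Implicit Arguments. Unset Strict Implicit. Unset Printing Implicit Defensive.
Import Order.TTheory GRing.Theory Num.Theory.
Import numFieldNormedType.Exports.
Local Open Scope classical_set_scope.
Local Open Scope ring_scope.

Section Defs.
Variables (R : realType) (d : nat).

(* Euclidean inner product and norm on R^d (the library norm on 'rV is the max norm) *)
Definition dotv (u v : 'rV[R]_d) : R := \sum_(i < d) u 0 i * v 0 i.
Definition enorm (v : 'rV[R]_d) : R := Num.sqrt (dotv v v).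

Definition opnorm (A : 'M[R]_d) : R :=
  sup [set enorm (A *m v^T)^T | v in [set v : 'rV[R]_d | enorm v <= 1]].

Definition ev (i : 'I_d) : 'rV[R]_d := delta_mx 0 i.
Definition partial (i : 'I_d) (f : 'rV[R]_d -> R) (x : 'rV[R]_d) : R :=
  'D_(ev i) f x.

Definition C2 (f : 'rV[R]_d -> R) : Prop :=
  [/\ continuous f,
      (forall i x, derivable f x (ev i)),
      (forall i, continuous (partial i f)),
      (forall i j x, derivable (partial i f) x (ev j)) &
      (forall i j, continuous (partial j (partial i f)))].

Definition grad (f : 'rV[R]_d -> R) (x : 'rV[R]_d) : 'rV[R]_d :=
  \row_i partial i f x.

Definition divB (B : R -> 'rV[R]_d -> 'M[R]_d) (t : R) (x : 'rV[R]_d) : 'rV[R]_d :=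
  \row_i \sum_(j < d) partial j (fun y => B t y i j) x.

Definition drift (Psi : 'rV[R]_d -> R) (B : R -> 'rV[R]_d -> 'M[R]_d)
  (t : R) (x : 'rV[R]_d) : 'rV[R]_d :=
  - (B t x *m (grad Psi x)^T)^T + divB B t x.

Definition tamed (b : R -> 'rV[R]_d -> 'rV[R]_d) (h t : R) (x : 'rV[R]_d) : 'rV[R]_d :=
  (1 + h * enorm (b t x))^-1 *: b t x.

Definition unitv (v : 'rV[R]_d) : 'rV[R]_d := (enorm v)^-1 *: v.

Definition dir_sup (b : R -> 'rV[R]_d -> 'rV[R]_d) (r : R) : \bar R :=
  ereal_sup [set y : \bar R | exists x t, r <= enorm x /\ 0 <= t /\
     y = (dotv (unitv x) (unitv (b t x)))%:E].

Definition norm_inf (b : R -> 'rV[R]_d -> 'rV[R]_d) (r : R) : \bar R :=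
  ereal_inf [set y : \bar R | exists x t, r <= enorm x /\ 0 <= t /\
     y = (enorm (b t x))%:E].

Definition tamed_sup (b : R -> 'rV[R]_d -> 'rV[R]_d) (hmax r : R) : \bar R :=
  ereal_sup [set y : \bar R | exists x t h, r <= enorm x /\ 0 <= t /\
     0 < h <= hmax /\
     y = (2 * dotv (unitv x) (tamed b h t x)
          + h / enorm x * enorm (tamed b h t x) ^+ 2)%:E].

End Defs.

From HB Require Import structures.
From mathcomp Require Import all_boot all_order all_algebra.
From mathcomp Require Import all_classical all_reals all_analysis.
From mathcomp Require Import ring lra.
Import Order.TTheory GRing.Theory Num.Theory.
Import numFieldNormedType.Exports.
Local Open Scope classical_set_scope.
Local Open Scope ring_scope.

(* Only (A4) is needed.  Write K = |b_h| = |b| / (1 + h|b|) and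
   D = <x/|x|, b/|b|>, so that the quantity under the supremum is
   2 K D + (h/|x|) K^2.  Far out, D <= m < 0 and |b| >= 1; then for h <= 1
   we have 1/2 <= K and h K <= 1, so the taming term is at most K/|x|, which
   for |x| >= -1/m is absorbed by half of 2 K D.  Hence the supremum is at
   most K m <= m/2 for all large r, with h_max = 1. *)

Section RealBounds.
Variable R : realFieldType.

Lemma taming_factor_ge_half (h n : R) :
  0 < h <= 1 -> 1 <= n -> 2^-1 <= n / (1 + h * n).
Proof.
move=> /andP[h0 h1] n1.
have q0 : 0 < 1 + h * n by nra.
by rewrite ler_pdivlMr // mulrC ler_pdivrMr //; nra.
Qed.

Lemma mul_taming_factor_le1 (h n : R) : 0 <= h -> 0 <= n -> h * (n / (1 + h * n)) <= 1.
Proof.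
move=> h0 n0; have q0 : 0 < 1 + h * n by nra.
by rewrite mulrA ler_pdivrMr // mul1r; lra.
Qed.

Lemma radial_bound (m D K h r : R) :
  m < 0 -> D <= m -> 2^-1 <= K -> h * K <= 1 -> - m^-1 <= r ->
  2 * (K * D) + h / r * K ^+ 2 <= m / 2.
Proof.
move=> m0 Dm K2 hK rm.
have r0 : 0 < r by apply: lt_le_trans rm; rewrite oppr_gt0 invr_lt0.
have K0 : 0 <= K by apply: le_trans K2; rewrite invr_ge0.
have inv_r : r^-1 <= - m.
  rewrite -[r^-1]mul1r ler_pdivrMr //.
  have mN : 0 <= - m by rewrite oppr_ge0 ltW.
  have := ler_wpM2l mN rm.
  by rewrite mulrNN mulfV ?lt_eqF.
have taming_term : h / r * K ^+ 2 <= K * - m.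
  have -> : h / r * K ^+ 2 = (h * K) * (K * r^-1) by ring.
  have KrK : K * r^-1 <= K * - m by rewrite ler_wpM2l.
  have Kr0 : 0 <= K * r^-1 by rewrite mulr_ge0 // invr_ge0 ltW.
  by nra.
have KD : K * D <= K * m by rewrite ler_wpM2l.
by nra.
Qed.

End RealBounds.

Section Euclidean.
Variables (R : realType) (d : nat).
Implicit Types (u v : 'rV[R]_d) (a : R).

Lemma dotvZl u v a : dotv (a *: u) v = a * dotv u v.
Proof. by rewrite /dotv mulr_sumr; apply: eq_bigr => i _; rewrite mxE mulrA. Qed.

Lemma dotvZr u v a : dotv u (a *: v) = a * dotv u v.
Proof. by rewrite /dotv mulr_sumr; apply: eq_bigr => i _; rewrite mxE mulrCA. Qed.

Lemma enormZ v a : enorm (a *: v) = `|a| * enorm v.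
Proof.
by rewrite /enorm dotvZl dotvZr mulrA -expr2 sqrtrM ?sqr_ge0 // sqrtr_sqr.
Qed.

Lemma dotv_unitvr u v : enorm v != 0 -> dotv u v = enorm v * dotv u (unitv v).
Proof. by move=> v0; rewrite /unitv dotvZr mulrA mulfV ?mul1r. Qed.

End Euclidean.

Section Taming.
Variables (R : realType) (d : nat) (b : R -> 'rV[R]_d -> 'rV[R]_d).

Lemma enorm_tamed (h t : R) x :
  0 <= h -> enorm (tamed b h t x) = enorm (b t x) / (1 + h * enorm (b t x)).
Proof.
move=> h0; have q0 : 0 < 1 + h * enorm (b t x).
  by rewrite ltr_pwDl // mulr_ge0 // sqrtr_ge0.
by rewrite enormZ gtr0_norm ?invr_gt0 // mulrC.
Qed.

Lemma dotv_tamed u (h t : R) x : 0 <= h -> enorm (b t x) != 0 ->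
  dotv u (tamed b h t x) = enorm (tamed b h t x) * dotv u (unitv (b t x)).
Proof.
move=> h0 b0.
by rewrite enorm_tamed // /tamed dotvZr dotv_unitvr // mulrA [_^-1 * _]mulrC.
Qed.

Lemma tamed_radial_bound (m h t : R) x :
  m < 0 -> 0 < h <= 1 -> 1 <= enorm (b t x) ->
  dotv (unitv x) (unitv (b t x)) <= m -> - m^-1 <= enorm x ->
  2 * dotv (unitv x) (tamed b h t x) + h / enorm x * enorm (tamed b h t x) ^+ 2
  <= m / 2.
Proof.
move=> m0 hI b1 Dm xm; have /andP[h0 _] := hI.
have enorm_tamed_h := enorm_tamed h t x (ltW h0).
have b0 : enorm (b t x) != 0 by rewrite gt_eqF // (lt_le_trans ltr01).
rewrite (dotv_tamed _ _ _ _ (ltW h0) b0); apply: radial_bound => //.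
- by rewrite enorm_tamed_h; apply: taming_factor_ge_half.
- by rewrite enorm_tamed_h; apply: mul_taming_factor_le1 (ltW h0) (le_trans ler01 b1).
Qed.

Lemma tamed_sup_cvg hmax :
  tamed_sup b hmax r @[r --> +oo] --> ereal_inf (range (tamed_sup b hmax)).
Proof.
apply: nonincreasing_cvge => r s rs; apply: ereal_sup_le.
move=> _ [x [t [h [xr [t0 [hI ->]]]]]].
by exists x, t, h; split => //; apply: le_trans xr.
Qed.

Lemma tamed_sup_le (m r : R) :
  m < 0 -> - m^-1 <= r -> (dir_sup b r <= m%:E)%E -> (1%:E <= norm_inf b r)%E ->
  (tamed_sup b 1 r <= (m / 2)%:E)%E.
Proof.
move=> m0 rm dir_le norm_ge.
apply: ge_ereal_sup => _ [x [t [h [xr [t0 [hI ->]]]]]].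
rewrite lee_fin; apply: tamed_radial_bound => //; last exact: le_trans xr.
- rewrite -lee_fin; apply: le_trans norm_ge _; apply: ereal_inf_lbound.
  by exists x, t.
- rewrite -lee_fin; apply: le_trans dir_le; apply: ereal_sup_ubound.
  by exists x, t.
Qed.

End Taming.

Lemma cvge_neg_near_lt {R : realFieldType} {T : Type} {F : set_system T} {FF : Filter F}
  {f : T -> \bar R} {l : \bar R} :
  f x @[x --> F] --> l -> (l < 0%:E)%E ->
  exists2 m : R, m < 0 & \forall x \near F, (f x < m%:E)%E.
Proof.
move=> fl l0; have [m m0 lm] : exists2 m : R, m < 0 & (l < m%:E)%E.
  case: l {fl} l0 => [s| |] //= l0.
  - by rewrite lte_fin in l0; exists (s / 2); rewrite ?lte_fin; lra.
  - by exists (-1); rewrite ?ltNyr //; lra.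
by exists m => //; exact: fl _ (open_ereal_lt' lm).
Qed.

Theorem lemma12 (R : realType) (d : nat) (hd : (1 <= d)%N)
  (Psi : 'rV[R]_d -> R) (B : R -> 'rV[R]_d -> 'M[R]_d)
  (L nB delta beta_l beta_u : R)
  (* (A1) *)
  (hPsiC2 : C2 Psi)
  (hPsiLip : forall x y, enorm (grad Psi x - grad Psi y) <= L * enorm (x - y))
  (hPsi0 : grad Psi 0 = 0)
  (* (A2) *)
  (hbl : 0 < beta_l) (hbu : 0 < beta_u)
  (hBsym : forall t x, 0 <= t -> (B t x)^T = B t x)
  (hBell : forall t x, 0 <= t -> forall v : 'rV[R]_d,
     beta_l * enorm v ^+ 2 <= dotv v (B t x *m v^T)^T /\
     dotv v (B t x *m v^T)^T <= beta_u * enorm v ^+ 2)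
  (* (A3) *)
  (hBC2 : forall t, 0 <= t -> forall i j, C2 (fun y => B t y i j))
  (hL : 0 < L) (hnB : 0 < nB) (hdelta : 2^-1 <= delta)
  (hBlipx : forall x y t, 0 < t ->
     Num.max (opnorm (B t x - B t y)) (enorm (divB B t x - divB B t y))
     <= L * (1 + enorm x `^ nB + enorm y `^ nB) * enorm (x - y))
  (hBholt : forall x s t, 0 < s -> 0 < t ->
     Num.max (opnorm (B s x - B t x)) (enorm (divB B s x - divB B t x))
     <= L * (1 + enorm x `^ nB) * `|s - t| `^ delta)
  (* (A4) *)
  (hA4dir : exists l : \bar R,
     (dir_sup (drift Psi B) r @[r --> +oo] --> l) /\ (l < 0%:E)%E)
  (hA4norm : norm_inf (drift Psi B) r @[r --> +oo] --> +oo%E)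
  : exists hmax : R, 0 < hmax /\
    exists l : \bar R,
      (tamed_sup (drift Psi B) hmax r @[r --> +oo] --> l) /\ (l < 0%:E)%E.
Proof.
set b := drift Psi B.
have [l [dir_cvg l0]] := hA4dir.
have [m m0 dir_lt] := cvge_neg_near_lt dir_cvg l0.
have norm_gt : \forall r \near +oo, (1%:E < norm_inf b r)%E.
  by apply: (cvgey_gtr hA4norm); exact: num_real.
have far := @nbhs_pinfty_ge R _ (num_real (- m^-1)).
have [r [[dir_r norm_r] rm]] := filter_ex (filterI (filterI dir_lt norm_gt) far).
exists 1; split => //; exists (ereal_inf (range (tamed_sup b 1))).
split; first exact: tamed_sup_cvg.
apply: (@le_lt_trans _ _ (tamed_sup b 1 r)); first by apply: ereal_inf_lbound; exists r.
apply: (@le_lt_trans _ _ (m / 2)%:E); last by rewrite lte_fin; lra.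
by apply: tamed_sup_le => //; apply: ltW.
Qed.
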